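(* The class NFQ is not elementary (i.e. there is no set of first-order sentences in the language of groups whose models are exactly the NFQ groups), and it is not closed under infinite (Cartesian) products: there is an NFQ group $G$ (e.g. $G=\mathbb Q * \mathbb Q$) such that $G^{\omega}$ is not NFQ.
   Context: A group is called NFQ if it is nontrivial and has no proper subgroups of finite index (equivalently, it is nontrivial and has no nontrivial finite quotients). $\mathbb Q$ denotes the additive group of rationals, $*$ denotes free product, and $G^{\omega}$ denotes the Cartesian product of countably many copies of $G$. *)

From Stdlib Require Import List FunctionalExtensionality PeanoNat.
Import ListNotations.

Record group := Group {
  carrier :> Type;
  gmul : carrier -> carrier -> carrier;
  ginv : carrier -> carrier;
  gone : carrier;
  gmulA : forall x y z, gmul x (gmul y z) = gmul (gmul x y) z;
  gmul1 : forall x, gmul gone x = x;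
  gmulV : forall x, gmul (ginv x) x = gone
}.

Arguments gmul {g}.
Arguments ginv {g}.
Arguments gone {g}.

Definition is_subgroup (G : group) (H : G -> Prop) : Prop :=
  H gone /\ (forall x y, H x -> H y -> H (gmul x y)) /\ (forall x, H x -> H (ginv x)).

Definition finite_index (G : group) (H : G -> Prop) : Prop :=
  exists l : list G, forall x : G, exists g, In g l /\ H (gmul (ginv g) x).

Definition proper (G : group) (H : G -> Prop) : Prop := exists x : G, ~ H x.

Definition nontrivial (G : group) : Prop := exists x : G, x <> gone.

Definition NFQ (G : group) : Prop :=
  nontrivial G /\
  forall H : G -> Prop, is_subgroup G H -> finite_index G H -> ~ proper G H.

Section Pow.
Variable G : group.
Definition pw_mul (f g : nat -> G) : nat -> G := fun n => gmul (f n) (g n).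
Definition pw_inv (f : nat -> G) : nat -> G := fun n => ginv (f n).
Definition pw_one : nat -> G := fun _ => gone.
Lemma pw_mulA f g h : pw_mul f (pw_mul g h) = pw_mul (pw_mul f g) h.
Proof. apply functional_extensionality; intro n. unfold pw_mul. apply gmulA. Qed.
Lemma pw_mul1 f : pw_mul pw_one f = f.
Proof. apply functional_extensionality; intro n. unfold pw_mul, pw_one. apply gmul1. Qed.
Lemma pw_mulV f : pw_mul (pw_inv f) f = pw_one.
Proof. apply functional_extensionality; intro n. unfold pw_mul, pw_inv, pw_one. apply gmulV. Qed.
End Pow.

Definition pow_omega (G : group) : group :=
  @Group (nat -> G) (pw_mul G) (pw_inv G) (pw_one G)
         (pw_mulA G) (pw_mul1 G) (pw_mulV G).

Inductive term : Type :=
  | tvar : nat -> term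
  | tone : term
  | tmul : term -> term -> term
  | tinv : term -> term.

Inductive formula : Type :=
  | feq : term -> term -> formula
  | ffalse : formula
  | fnot : formula -> formula
  | fand : formula -> formula -> formula
  | f_or : formula -> formula -> formula
  | fimp : formula -> formula -> formula
  | fall : nat -> formula -> formula
  | fex : nat -> formula -> formula.

Fixpoint fv_term (t : term) : list nat :=
  match t with
  | tvar n => [n]
  | tone => []
  | tmul a b => fv_term a ++ fv_term b
  | tinv a => fv_term a
  end.

Fixpoint fv (phi : formula) : list nat :=
  match phi with
  | feq a b => fv_term a ++ fv_term b
  | ffalse => []
  | fnot p => fv p
  | fand p q | f_or p q | fimp p q => fv p ++ fv q
  | fall x p | fex x p => remove Nat.eq_dec x (fv p)
  end.

Definition sentence (phi : formula) : Prop := fv phi = [].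

Fixpoint eval_term (G : group) (s : nat -> G) (t : term) : G :=
  match t with
  | tvar n => s n
  | tone => gone
  | tmul a b => gmul (eval_term G s a) (eval_term G s b)
  | tinv a => ginv (eval_term G s a)
  end.

Definition update (G : group) (s : nat -> G) (x : nat) (v : G) : nat -> G :=
  fun n => if Nat.eqb n x then v else s n.

Fixpoint sat (G : group) (s : nat -> G) (phi : formula) : Prop :=
  match phi with
  | feq a b => eval_term G s a = eval_term G s b
  | ffalse => False
  | fnot p => ~ sat G s p
  | fand p q => sat G s p /\ sat G s q
  | f_or p q => sat G s p \/ sat G s q
  | fimp p q => sat G s p -> sat G s q
  | fall x p => forall v : G, sat G (update G s x v) p
  | fex x p => exists v : G, sat G (update G s x v) p
  end.

Definition models (G : group) (phi : formula) : Prop := forall s : nat -> G, sat G s phi.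

Definition elementary_class (C : group -> Prop) : Prop :=
  exists T : formula -> Prop,
    (forall phi, T phi -> sentence phi) /\
    (forall G : group, C G <-> (forall phi, T phi -> models G phi)).

From Stdlib Require Import List Arith Lia Classical ClassicalEpsilon ProofIrrelevance
  FunctionalExtensionality PropExtensionality Reals Lra Bool.
From mathcomp Require boolp classical_sets filter.
Import ListNotations.

(** The witness is [L = I ⋊ D], where [D = R^nat] (a divisible group with
    infinitely many independent directions) acts by translation on the group
    [I] of even finite subsets of [D] under symmetric difference.

    - [L] is NFQ: divisible elements lie in every finite-index subgroup, the
      translations are divisible, and every pair [{a, b}] is a commutator of a
      translation with a conjugate of a translation; even sets are products of
      pairs.
    - In every square or commutator of [L] the lit set is a sum of one or two
      "doubled" sets [S + (S + d)].  A parity argument against a basis vector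
      isolated modulo the translations used shows that
      [{e_0, ..., e_(2k-1)}] needs at least [k] doubled sets.
    - Hence in an ultrapower [L^nat / U] by a non-principal ultrafilter, the
      uniformly short elements form a subgroup containing all squares and
      commutators but not the class of [n |-> {e_0, ..., e_(2n-1)}]; by Zorn's
      lemma this yields a subgroup of index two, so the ultrapower is not NFQ.
    - Łoś's theorem then shows that NFQ is not elementary, and pulling the
      index-two subgroup back along [L^omega -> L^nat / U] shows that
      [L^omega] is not NFQ. *)

Section GroupFacts.
Variable K : group.

Lemma gmulV_r (x : K) : gmul x (ginv x) = gone.
Proof.
  rewrite <- (gmul1 K (gmul x (ginv x))), <- (gmulV K (ginv x)) at 1.
  rewrite <- gmulA, (gmulA K (ginv x) x (ginv x)), gmulV, gmul1. apply gmulV.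
Qed.

Lemma gmul1_r (x : K) : gmul x gone = x.
Proof. rewrite <- (gmulV K x), gmulA, gmulV_r. apply gmul1. Qed.

Lemma ginv_unique (x y : K) : gmul x y = gone -> y = ginv x.
Proof.
  intro Hxy. rewrite <- (gmul1 K y), <- (gmulV K x), <- gmulA, Hxy. apply gmul1_r.
Qed.

Lemma ginv_mul (x y : K) : ginv (gmul x y) = gmul (ginv y) (ginv x).
Proof.
  symmetry. apply ginv_unique.
  rewrite <- gmulA, (gmulA K y), gmulV_r, gmul1, gmulV_r. reflexivity.
Qed.

Lemma ginv_inv (x : K) : ginv (ginv x) = x.
Proof. symmetry. apply ginv_unique, gmulV. Qed.

Lemma ginv_one : ginv (@gone K) = gone.
Proof. symmetry. apply ginv_unique, gmul1. Qed.

Lemma gmulKV (x w : K) : gmul x (gmul (ginv x) w) = w.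
Proof. rewrite gmulA, gmulV_r. apply gmul1. Qed.

Lemma gmulVK (x w : K) : gmul (ginv x) (gmul x w) = w.
Proof. rewrite gmulA, gmulV. apply gmul1. Qed.

Fixpoint gpow (x : K) (n : nat) : K :=
  match n with 0 => gone | S n => gmul x (gpow x n) end.

Lemma gpow_add x m n : gpow x (m + n) = gmul (gpow x m) (gpow x n).
Proof. induction m; simpl; [now rewrite gmul1 | rewrite IHm; apply gmulA]. Qed.

Lemma gpow_mul x m n : gpow x (m * n) = gpow (gpow x m) n.
Proof.
  induction n; simpl; [now rewrite Nat.mul_0_r|].
  rewrite Nat.mul_succ_r, Nat.add_comm, gpow_add, IHn. reflexivity.
Qed.

Lemma gpow_conj g z n :
  gpow (gmul (gmul g z) (ginv g)) n = gmul (gmul g (gpow z n)) (ginv g).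
Proof.
  induction n; simpl; [rewrite gmul1_r; symmetry; apply gmulV_r|].
  rewrite IHn, <- !gmulA, (gmulA K (ginv g) g), gmulV, gmul1. reflexivity.
Qed.

Lemma subgroup_pow H (x : K) n : is_subgroup K H -> H x -> H (gpow x n).
Proof. intros [H1 [HM _]] Hx. induction n; simpl; auto. Qed.

Definition divisible (x : K) : Prop := forall n, exists z, gpow z (S n) = x.

Lemma divisible_conj (g x : K) :
  divisible x -> divisible (gmul (gmul g x) (ginv g)).
Proof.
  intros Hx n. destruct (Hx n) as [z Hz].
  exists (gmul (gmul g z) (ginv g)). rewrite gpow_conj, Hz. reflexivity.
Qed.

End GroupFacts.

Arguments gpow {K}.
Arguments divisible {K}.

Ltac gsimpl := repeat progress (rewrite <- ?gmulA;
  rewrite ?gmulKV, ?gmulVK, ?gmulV, ?gmulV_r, ?gmul1, ?gmul1_r, ?ginv_inv, ?ginv_mul,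
    ?ginv_one).

Definition proper_fi_subgroup (K : group) : Prop :=
  exists H : K -> Prop, is_subgroup K H /\ finite_index K H /\ proper K H.

Lemma proper_fi_not_NFQ K : proper_fi_subgroup K -> ~ NFQ K.
Proof. intros [H [HS [HF HP]]] [_ HN]. exact (HN H HS HF HP). Qed.

Lemma pigeonhole_map {A B} (f : A -> B) (s : list A) :
  NoDup s -> ~ NoDup (map f s) ->
  exists i j, In i s /\ In j s /\ i <> j /\ f i = f j.
Proof.
  induction s as [|a s IH]; intros Hs Hm; [exfalso; apply Hm; constructor|].
  inversion Hs as [|? ? Ha Hs']; subst. simpl in Hm.
  destruct (classic (In (f a) (map f s))) as [Hin|Hin].
  - apply in_map_iff in Hin. destruct Hin as [j [Hj1 Hj2]].
    exists a, j. repeat split; simpl; auto. intro E; subst; contradiction.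
  - destruct (classic (NoDup (map f s))) as [Hn|Hn]; [exfalso; apply Hm; constructor; auto|].
    destruct (IH Hs' Hn) as [i [j [? [? [? ?]]]]]. exists i, j. simpl; auto.
Qed.

Lemma divide_fact q n : 1 <= q <= n -> Nat.divide q (fact n).
Proof.
  induction n; intros Hq; [lia|].
  destruct (Nat.eq_dec q (S n)) as [->|E]; simpl fact.
  - exists (fact n). lia.
  - apply Nat.divide_add_r; [|apply Nat.divide_mul_r]; apply IHn; lia.
Qed.

(** If [H] has at most [L] left cosets, then some power [z ^ q] with
    [1 <= q <= L] lies in [H]: two of [z ^ 0, ..., z ^ L] share a coset. *)
Lemma finite_index_power (K : group) (H : K -> Prop) (l : list K) (z : K) :
  is_subgroup K H -> (forall y : K, exists g, In g l /\ H (gmul (ginv g) y)) ->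
  exists q, 1 <= q <= length l /\ H (gpow z q).
Proof.
  intros HS Hl.
  assert (Hc : forall i, {g | In g l /\ H (gmul (ginv g) (gpow z i))})
    by (intro i; apply constructive_indefinite_description, Hl).
  set (coset := fun i => proj1_sig (Hc i)).
  assert (Hdup : ~ NoDup (map coset (seq 0 (S (length l))))).
  { intro Hn. apply NoDup_incl_length with (l' := l) in Hn.
    - rewrite length_map, length_seq in Hn. lia.
    - intros g Hg. apply in_map_iff in Hg. destruct Hg as [i [<- _]].
      exact (proj1 (proj2_sig (Hc i))). }
  assert (Hsame : forall i j, i < j -> coset i = coset j -> H (gpow z (j - i))).
  { intros i j Hij Eij.
    pose proof (proj2 (proj2_sig (Hc i))) as Hi. pose proof (proj2 (proj2_sig (Hc j))) as Hj.
    fold (coset i) in Hi. fold (coset j) in Hj. rewrite Eij in Hi.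
    replace (gpow z (j - i)) with
      (gmul (ginv (gmul (ginv (coset j)) (gpow z i)))
            (gmul (ginv (coset j)) (gmul (gpow z i) (gpow z (j - i))))) by (gsimpl; reflexivity).
    apply HS; [apply HS, Hi|]. rewrite <- gpow_add, Nat.add_comm, Nat.sub_add; [exact Hj | lia]. }
  destruct (pigeonhole_map coset _ (seq_NoDup _ _) Hdup) as [i [j [Hi [Hj [Hij Eij]]]]].
  apply in_seq in Hi, Hj.
  assert (Hlt : i < j \/ j < i) by lia.
  destruct Hlt; [exists (j - i) | exists (i - j)]; split; try lia; auto.
Qed.

(** With [L] cosets, write [x = z ^ L!]; some [z ^ q] with [1 <= q <= L]
    lies in [H], and [q] divides [L!]. *)
Lemma divisible_in_finite_index (K : group) (H : K -> Prop) (x : K) :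
  is_subgroup K H -> finite_index K H -> divisible x -> H x.
Proof.
  intros HS [l Hl] Hdiv.
  destruct (Hdiv (pred (fact (length l)))) as [z Hz].
  rewrite Nat.succ_pred in Hz by (apply Nat.neq_0_lt_0, lt_O_fact).
  destruct (finite_index_power K H l z HS Hl) as [q [Hq Hzq]].
  destruct (divide_fact q (length l) Hq) as [c Hc].
  rewrite <- Hz, Hc, Nat.mul_comm, gpow_mul. apply subgroup_pow; auto.
Qed.

Section Zorn.
Variable A : Type.

Definition sub_set (X Y : A -> Prop) : Prop := forall a, X a -> Y a.
Definition chain (C : (A -> Prop) -> Prop) : Prop :=
  forall X Y, C X -> C Y -> sub_set X Y \/ sub_set Y X.
Definition union (C : (A -> Prop) -> Prop) : A -> Prop := fun a => exists X, C X /\ X a.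

Lemma zorn_sets (P : (A -> Prop) -> Prop) (X0 : A -> Prop) :
  P X0 ->
  (forall C, (forall X, C X -> P X) -> (exists X, C X) -> chain C -> P (union C)) ->
  exists M, P M /\ forall Y, P Y -> sub_set M Y -> sub_set Y M.
Proof.
  intros HX0 Hunion.
  set (R := fun X Y : {X | P X} => boolp.asbool (sub_set (proj1_sig X) (proj1_sig Y))).
  assert (HR : forall X Y, R X Y = true <-> sub_set (proj1_sig X) (proj1_sig Y))
    by (intros X Y; split; intro H; [apply (ssrbool.elimT (boolp.asboolP _)) | apply (ssrbool.introT (boolp.asboolP _))]; exact H).
  destruct (@classical_sets.ZL_preorder _ (exist _ X0 HX0) R) as [[M HM] Hmax].
  - intro X. apply HR. intros a Ha; exact Ha.
  - intros X Y Z HXY HYZ. apply HR. apply HR in HXY, HYZ. intros a Ha; auto.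
  - intros C Htot.
    destruct (classic (exists X, C X)) as [[X1 HX1]|Hempty].
    + set (C' := fun Y => exists X, C X /\ proj1_sig X = Y).
      assert (HC' : forall Y, C' Y -> P Y) by (intros Y [[X HX] [_ <-]]; exact HX).
      assert (HPU : P (union C')).
      { apply Hunion; [exact HC' | exists (proj1_sig X1); exists X1; auto|].
        intros Y Y' [X [HX <-]] [X' [HX' <-]].
        destruct (Htot X X' HX HX') as [H|H]; [left|right]; apply HR; exact H. }
      exists (exist _ _ HPU). intros X HX. apply HR. intros a Ha.
      exists (proj1_sig X). split; [exists X; auto | exact Ha].
    + exists (exist P X0 HX0). intros X HX. exfalso. eauto.
  - exists M. split; [exact HM|]. intros Y HY HMY.
    apply (proj1 (HR (exist _ Y HY) (exist _ M HM))), Hmax, HR, HMY.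
Qed.

End Zorn.
Arguments sub_set {A}.
Arguments chain {A}.
Arguments union {A}.

(** If a subgroup [N] contains all squares and commutators, then [K / N] is
    an elementary abelian 2-group, i.e. an F_2-vector space; any [t] outside
    [N] is then avoided by a hyperplane, a subgroup of index two. *)

Section IndexTwo.
Variable K : group.
Variable N : K -> Prop.
Hypothesis N_subgroup : is_subgroup K N.
Hypothesis N_squares : forall x : K, N (gmul x x).
Hypothesis N_commutators :
  forall x y : K, N (gmul (gmul (gmul x y) (ginv x)) (ginv y)).

Lemma normal_over_N (M : K -> Prop) :
  is_subgroup K M -> sub_set N M -> forall x y, M y -> M (gmul (gmul (ginv x) y) x).
Proof.
  intros [_ [HMm _]] HNM x y Hy.
  replace (gmul (gmul (ginv x) y) x) with
    (gmul y (gmul (gmul (gmul (ginv y) (ginv x)) (ginv (ginv y))) (ginv (ginv x))))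
    by (gsimpl; reflexivity).
  apply HMm; [exact Hy | apply HNM, N_commutators].
Qed.

(** Adjoining one coset [x M] to a subgroup [M] containing [N] gives a
    subgroup, since [x ^ 2] lies in [M]. *)
Lemma adjoin_coset_subgroup (M : K -> Prop) (x : K) :
  is_subgroup K M -> sub_set N M ->
  is_subgroup K (fun y => M y \/ M (gmul (ginv x) y)).
Proof.
  intros HM HNM. pose proof (normal_over_N M HM HNM) as Mnorm.
  destruct HM as [HM1 [HMm HMi]].
  split; [left; exact HM1|split].
  - intros y z [Hy|Hy] [Hz|Hz].
    + left; auto.
    + right. replace (gmul (ginv x) (gmul y z)) with
        (gmul (gmul (gmul (ginv x) y) x) (gmul (ginv x) z)) by (gsimpl; reflexivity).
      apply HMm; [apply Mnorm; exact Hy | exact Hz].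
    + right. rewrite gmulA. apply HMm; auto.
    + left. replace (gmul y z) with
        (gmul (gmul (gmul x x) (gmul (gmul (ginv x) (gmul (ginv x) y)) x)) (gmul (ginv x) z))
        by (gsimpl; reflexivity).
      apply HMm; [apply HMm; [apply HNM, N_squares | apply Mnorm; exact Hy] | exact Hz].
  - intros y [Hy|Hy]; [left; auto|right].
    replace (gmul (ginv x) (ginv y)) with
      (gmul (gmul (gmul (ginv x) (ginv (gmul (ginv x) y))) x) (gmul (ginv x) (ginv x)))
      by (gsimpl; reflexivity).
    apply HMm; [apply Mnorm, HMi, Hy | apply HNM, N_squares].
Qed.

Definition avoids (t : K) (M : K -> Prop) : Prop := is_subgroup K M /\ sub_set N M /\ ~ M t.

Lemma maximal_avoiding (t : K) : ~ N t ->
  exists M, avoids t M /\ forall Y, avoids t Y -> sub_set M Y -> sub_set Y M.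
Proof.
  intro Nt. unfold avoids. apply (zorn_sets K _ N).
  { split; [exact N_subgroup | split; [intros a Ha; exact Ha | exact Nt]]. }
  intros C HC [X1 HX1] Hc.
  assert (Hsub : forall X, C X -> is_subgroup K X) by (intros X HX; apply HC, HX).
  split; [split; [|split]|split].
  - exists X1. split; [exact HX1 | apply (Hsub X1 HX1)].
  - intros a b [X [HX Ha]] [Y [HY Hb]].
    destruct (Hc X Y HX HY) as [HXY|HYX]; [exists Y|exists X]; split; auto.
    + apply (Hsub Y HY); auto.
    + apply (Hsub X HX); auto.
  - intros a [X [HX Ha]]. exists X. split; auto. apply (Hsub X HX); auto.
  - intros a Ha. exists X1. split; auto. apply (HC X1 HX1); auto.
  - intros [X [HX HXt]]. apply (HC X HX); auto.
Qed.

Lemma maximal_avoiding_index_two (t : K) (M : K -> Prop) :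
  avoids t M -> (forall Y, avoids t Y -> sub_set M Y -> sub_set Y M) ->
  forall x, M x \/ M (gmul (ginv t) x).
Proof.
  intros [HM [HNM HMt]] Hmax x.
  destruct (classic (M x)) as [Hx|Hx]; [left; exact Hx|right].
  set (Mx := fun y => M y \/ M (gmul (ginv x) y)).
  assert (Mx_t : Mx t).
  { apply NNPP; intro Hn. apply Hx, (Hmax Mx).
    - split; [apply adjoin_coset_subgroup; auto | split; [intros a Ha; left; auto | exact Hn]].
    - intros a Ha; left; exact Ha.
    - right. rewrite gmulV. apply HM. }
  destruct Mx_t as [Ht|Ht]; [contradiction|].
  apply (proj2 (proj2 HM)) in Ht. rewrite ginv_mul, ginv_inv in Ht. exact Ht.
Qed.

Theorem proper_fi_of_exponent_two_quotient (t : K) : ~ N t -> proper_fi_subgroup K.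
Proof.
  intro Nt. destruct (maximal_avoiding t Nt) as [M [HMa Hmax]].
  pose proof (maximal_avoiding_index_two t M HMa Hmax) as Hcosets.
  destruct HMa as [HM [_ HMt]].
  exists M. split; [exact HM|split; [|exists t; exact HMt]].
  exists [gone; t]. intro x. destruct (Hcosets x) as [Hx|Hx].
  - exists gone. split; [simpl; auto|]. rewrite ginv_one, gmul1. exact Hx.
  - exists t. split; [simpl; auto | exact Hx].
Qed.

End IndexTwo.

Record UF := {
  uf : (nat -> Prop) -> Prop;
  uf_full : uf (fun _ => True);
  uf_empty : ~ uf (fun _ => False);
  uf_and : forall A B, uf A -> uf B -> uf (fun n => A n /\ B n);
  uf_mono : forall A B : nat -> Prop, uf A -> (forall n, A n -> B n) -> uf B;
  uf_ultra : forall A, uf A \/ uf (fun n => ~ A n);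
  uf_cof : forall m, uf (fun n => m <= n)
}.

Lemma ultrafilter_exists : inhabited UF.
Proof.
  destruct (@filter.ultraFilterLemma nat filter.eventually _) as [F [HF Hcof]].
  assert (HFF : filter.Filter F) by apply HF.
  refine (inhabits {| uf := F |}).
  - apply filter.filterT.
  - apply (filter.filter_not_empty F).
  - intros A B HA HB. apply filter.filterI; auto.
  - intros A B HA HAB. exact (filter.filterS HAB HA).
  - intro A. apply filter.in_ultra_setVsetC. exact HF.
  - intro m. apply Hcof. exists m; [exact I|]. intros n Hn. apply (ssrbool.elimT ssrnat.leP), Hn.
Qed.

Section UltrafilterFacts.
Variable U : UF.

Lemma uf_ex A : uf U A -> exists n, A n.
Proof.
  intro H. apply NNPP; intro Hn. apply (uf_empty U), (uf_mono U A); auto.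
  intros n Hn'. apply Hn. exists n; auto.
Qed.

Lemma uf_and3 A B C : uf U A -> uf U B -> uf U C -> uf U (fun n => A n /\ B n /\ C n).
Proof. intros. apply (uf_and U); auto. apply (uf_and U); auto. Qed.

Lemma uf_not A : uf U (fun n => ~ A n) <-> ~ uf U A.
Proof.
  split.
  - intros H1 H2. apply (uf_empty U), (uf_mono U _ _ (uf_and U _ _ H1 H2)). intros n [a b]; auto.
  - intro H. destruct (uf_ultra U A); [contradiction | auto].
Qed.

End UltrafilterFacts.

(** * Ultrapowers and Łoś's theorem *)

Section Ultrapower.
Variable G : group.
Variable U : UF.

(** Elements of the ultrapower [G^nat / U] are the classes of sequences
    under equality [U]-almost everywhere. *)
Definition ucls (f : nat -> G) : (nat -> G) -> Prop := fun g => uf U (fun n => f n = g n).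
Definition UCarrier := { c : (nat -> G) -> Prop | exists f, c = ucls f }.
Definition umk (f : nat -> G) : UCarrier := exist _ (ucls f) (ex_intro _ f eq_refl).
Definition urep (c : UCarrier) : nat -> G :=
  proj1_sig (constructive_indefinite_description _ (proj2_sig c)).

Lemma urep_spec c : proj1_sig c = ucls (urep c).
Proof.
  unfold urep. destruct (constructive_indefinite_description _ (proj2_sig c)); simpl; auto.
Qed.

Lemma UCarrier_eq (a b : UCarrier) : proj1_sig a = proj1_sig b -> a = b.
Proof.
  destruct a as [a Ha], b as [b Hb]; simpl. intros <-. f_equal. apply proof_irrelevance.
Qed.

Lemma ucls_eq f g : ucls f = ucls g -> uf U (fun n => f n = g n).
Proof.
  intro E. change (ucls f g). rewrite E. apply (uf_mono U _ _ (uf_full U)). auto.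
Qed.

Lemma umk_eq f g : uf U (fun n => f n = g n) -> umk f = umk g.
Proof.
  intro H. apply UCarrier_eq. simpl. apply functional_extensionality; intro h.
  apply propositional_extensionality. unfold ucls.
  split; intro H'; apply (uf_mono U _ _ (uf_and U _ _ H H')); intros n [e1 e2]; congruence.
Qed.

Lemma umk_urep c : umk (urep c) = c.
Proof. apply UCarrier_eq. simpl. symmetry. apply urep_spec. Qed.

Lemma urep_umk f : uf U (fun n => urep (umk f) n = f n).
Proof. apply ucls_eq. rewrite <- urep_spec. reflexivity. Qed.

Definition umul (a b : UCarrier) : UCarrier := umk (fun n => gmul (urep a n) (urep b n)).
Definition uinv (a : UCarrier) : UCarrier := umk (fun n => ginv (urep a n)).
Definition uone : UCarrier := umk (fun _ => gone).

Lemma umulA x y z : umul x (umul y z) = umul (umul x y) z.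
Proof.
  unfold umul. apply umk_eq.
  apply (uf_mono U _ _ (uf_and U _ _ (urep_umk (fun n => gmul (urep y n) (urep z n)))
                                     (urep_umk (fun n => gmul (urep x n) (urep y n))))).
  intros n [e1 e2]. rewrite e1, e2. apply gmulA.
Qed.

Lemma umul1 x : umul uone x = x.
Proof.
  unfold umul, uone. transitivity (umk (urep x)); [|apply umk_urep]. apply umk_eq.
  apply (uf_mono U _ _ (urep_umk (fun _ => gone))). intros n e. rewrite e. apply gmul1.
Qed.

Lemma umulV x : umul (uinv x) x = uone.
Proof.
  unfold umul, uinv, uone. apply umk_eq. apply (uf_mono U _ _ (urep_umk (fun n => ginv (urep x n)))).
  intros n e. rewrite e. apply gmulV.
Qed.

Definition ultrapower : group := Group UCarrier umul uinv uone umulA umul1 umulV.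

Lemma umk_mul (f g : nat -> G) : umk (pw_mul G f g) = umul (umk f) (umk g).
Proof.
  apply umk_eq. apply (uf_mono U _ _ (uf_and U _ _ (urep_umk f) (urep_umk g))).
  intros n [e1 e2]. unfold pw_mul. rewrite e1, e2. reflexivity.
Qed.

Lemma umk_inv (f : nat -> G) : umk (pw_inv G f) = uinv (umk f).
Proof.
  apply umk_eq. apply (uf_mono U _ _ (urep_umk f)). intros n e. unfold pw_inv. rewrite e.
  reflexivity.
Qed.

Definition coord (s : nat -> ultrapower) (n : nat) : nat -> G := fun x => urep (s x) n.

Lemma coord_update s x v n : coord (update ultrapower s x v) n = update G (coord s n) x (urep v n).
Proof.
  apply functional_extensionality; intro y. unfold coord, update. destruct (Nat.eqb y x); auto.
Qed.

Lemma los_term (s : nat -> ultrapower) t :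
  uf U (fun n => urep (eval_term ultrapower s t) n = eval_term G (coord s n) t).
Proof.
  induction t; cbn [eval_term].
  - apply (uf_mono U _ _ (uf_full U)). intros; reflexivity.
  - apply (urep_umk (fun _ => gone)).
  - apply (uf_mono U _ _ (uf_and3 _ _ _ _ (urep_umk (fun n =>
      gmul (urep (eval_term ultrapower s t1) n) (urep (eval_term ultrapower s t2) n))) IHt1 IHt2)).
    intros n [e1 [e2 e3]]. etransitivity; [exact e1|]. rewrite e2, e3. reflexivity.
  - apply (uf_mono U _ _ (uf_and U _ _
      (urep_umk (fun n => ginv (urep (eval_term ultrapower s t) n))) IHt)).
    intros n [e1 e2]. etransitivity; [exact e1|]. rewrite e2. reflexivity.
Qed.

Lemma ultrapower_witness (P : nat -> G -> Prop) :
  uf U (fun k => exists w, P k w) -> exists v : ultrapower, uf U (fun k => P k (urep v k)).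
Proof.
  intro H. set (w := fun k => epsilon (inhabits gone) (P k)). exists (umk w).
  apply (uf_mono U _ _ (uf_and U _ _ H (urep_umk w))). intros k [Hk ->].
  apply epsilon_spec, Hk.
Qed.

Definition los_for (phi : formula) : Prop := forall s : nat -> ultrapower,
  sat ultrapower s phi <-> uf U (fun n => sat G (coord s n) phi).

Lemma los_eq t t' : los_for (feq t t').
Proof.
  intro s. simpl. pose proof (los_term s t) as H1. pose proof (los_term s t') as H2. split.
  - intros E. rewrite E in H1.
    apply (uf_mono U _ _ (uf_and U _ _ H1 H2)). intros n [e1 e2]. congruence.
  - intro H. rewrite <- (umk_urep (eval_term ultrapower s t)),
      <- (umk_urep (eval_term ultrapower s t')).
    apply umk_eq, (uf_mono U _ _ (uf_and3 _ _ _ _ H1 H2 H)). intros n [e1 [e2 e3]]. congruence.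
Qed.

(** The universal case uses the ultrapower's choice of counterexamples. *)
Lemma los_forall x phi : los_for phi -> los_for (fall x phi).
Proof.
  intros IH s. simpl. split.
  - intro H. apply NNPP; intro Hn. apply uf_not in Hn.
    destruct (ultrapower_witness (fun k w => ~ sat G (update G (coord s k) x w) phi)) as [v Hv].
    { apply (uf_mono U _ _ Hn). intros k Hk. apply not_all_ex_not, Hk. }
    specialize (H v). apply IH in H.
    destruct (uf_ex _ _ (uf_and U _ _ H Hv)) as [k [a b]].
    rewrite coord_update in a. contradiction.
  - intros H v. apply IH, (uf_mono U _ _ H). intros k Hk. rewrite coord_update. apply Hk.
Qed.

Lemma los_exists x phi : los_for phi -> los_for (fex x phi).
Proof.
  intros IH s. simpl. split.
  - intros [v Hv]. apply IH in Hv. apply (uf_mono U _ _ Hv). intros k Hk.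
    rewrite coord_update in Hk. eexists; exact Hk.
  - intro H. destruct (ultrapower_witness (fun k w => sat G (update G (coord s k) x w) phi) H)
      as [v Hv].
    exists v. apply IH, (uf_mono U _ _ Hv). intros k Hk. rewrite coord_update. exact Hk.
Qed.

(** Łoś's theorem: the connectives commute with [U]-limits since [U] is an
    ultrafilter. *)
Theorem los (phi : formula) : los_for phi.
Proof.
  induction phi as [t t'| |phi IH|phi1 IH1 phi2 IH2|phi1 IH1 phi2 IH2|phi1 IH1 phi2 IH2
                   |x phi IH|x phi IH];
    [apply los_eq| | | | | |apply los_forall, IH|apply los_exists, IH];
    unfold los_for in *; intro s; simpl.
  - split; [contradiction | apply uf_empty].
  - rewrite IH. symmetry. apply uf_not.
  - rewrite IH1, IH2. split.
    + intros [H1 H2]. apply (uf_and U); auto.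
    + intro H. split; apply (uf_mono U _ _ H); intros n [a b]; auto.
  - rewrite IH1, IH2. split.
    + intros [H|H]; apply (uf_mono U _ _ H); auto.
    + intro H. apply NNPP; intro Hn. apply not_or_and in Hn. destruct Hn as [Ha Hb].
      apply uf_not in Ha, Hb. apply (uf_empty U).
      apply (uf_mono U _ _ (uf_and3 _ _ _ _ H Ha Hb)). intros n [[a|a] [b c]]; auto.
  - rewrite IH1, IH2. split.
    + intro H. destruct (uf_ultra U (fun n => sat G (coord s n) phi1)) as [Ha|Ha].
      * apply (uf_mono U _ _ (H Ha)). auto.
      * apply (uf_mono U _ _ Ha). intros n a b; contradiction.
    + intros H Ha. apply (uf_mono U _ _ (uf_and U _ _ H Ha)). intros n [a b]; auto.
Qed.

Corollary models_ultrapower phi : models G phi -> models ultrapower phi.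
Proof. intros H s. apply los, (uf_mono U _ _ (uf_full U)). intros; apply H. Qed.

Lemma proper_fi_power_of_ultrapower :
  proper_fi_subgroup ultrapower -> proper_fi_subgroup (pow_omega G).
Proof.
  intros [H [[H1 [Hm Hi]] [[l Hl] [y Hy]]]].
  exists (fun f => H (umk f)). split; [split; [|split]|split].
  - exact H1.
  - intros f g Hf Hg. simpl. rewrite umk_mul. apply Hm; auto.
  - intros f Hf. simpl. rewrite umk_inv. apply Hi; auto.
  - exists (map urep l). intro f. destruct (Hl (umk f)) as [g [Hg HH]].
    exists (urep g). split; [apply in_map; auto|].
    simpl. rewrite umk_mul, umk_inv, umk_urep. exact HH.
  - exists (urep y). simpl. rewrite umk_urep. exact Hy.
Qed.

End Ultrapower.

(** * Linear algebra in [R^nat] *)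

Open Scope R_scope.

(** Vectors of [D = R^nat] (arbitrary real sequences), with the standard
    basis vectors [ev a]. *)
Definition Dv := nat -> R.
Definition vadd (x y : Dv) : Dv := fun i => x i + y i.
Definition vneg (x : Dv) : Dv := fun i => - x i.
Definition vsub (x y : Dv) : Dv := fun i => x i - y i.
Definition vzero : Dv := fun _ => 0.
Definition vscale (c : R) (x : Dv) : Dv := fun i => c * x i.
Definition ev (a : nat) : Dv := fun i => if Nat.eqb i a then 1 else 0.

Definition lc (cs : list (R * Dv)) : Dv :=
  fold_right (fun p acc => vadd (vscale (fst p) (snd p)) acc) vzero cs.

Definition in_span (u : list Dv) (v : Dv) : Prop :=
  exists cs, (forall p, In p cs -> In (snd p) u) /\ v = lc cs.

Lemma vext (x y : Dv) : (forall i, x i = y i) -> x = y.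
Proof. intro H; apply functional_extensionality; auto. Qed.

Lemma lc_app cs cs' : lc (cs ++ cs') = vadd (lc cs) (lc cs').
Proof.
  induction cs; simpl; apply vext; intro i; unfold vadd, vscale, vzero.
  - lra.
  - rewrite IHcs. unfold vadd. lra.
Qed.

Lemma lc_scale c cs : lc (map (fun p => (c * fst p, snd p)) cs) = vscale c (lc cs).
Proof.
  induction cs; simpl; apply vext; intro i; unfold vadd, vscale, vzero.
  - lra.
  - rewrite IHcs. unfold vscale. simpl. lra.
Qed.

Lemma span_zero u : in_span u vzero.
Proof. exists []. split; simpl; auto. contradiction. Qed.

Lemma span_mem u v : In v u -> in_span u v.
Proof.
  intro H. exists [(1, v)]. split.
  - intros p [<-|[]]; auto.
  - apply vext; intro i. simpl. unfold vadd, vscale, vzero. lra.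
Qed.

Lemma span_add u v w : in_span u v -> in_span u w -> in_span u (vadd v w).
Proof.
  intros [cs [H1 ->]] [cs' [H2 ->]]. exists (cs ++ cs'). split.
  - intros p Hp. apply in_app_or in Hp. destruct Hp; auto.
  - rewrite lc_app; auto.
Qed.

Lemma span_scale u c v : in_span u v -> in_span u (vscale c v).
Proof.
  intros [cs [H1 ->]]. exists (map (fun p => (c * fst p, snd p)) cs). split.
  - intros p Hp. apply in_map_iff in Hp. destruct Hp as [q [<- Hq]]. simpl. auto.
  - rewrite lc_scale; auto.
Qed.

Lemma span_lc u cs : (forall p, In p cs -> in_span u (snd p)) -> in_span u (lc cs).
Proof.
  induction cs; intro H; simpl.
  - apply span_zero.
  - apply span_add. apply span_scale, H; simpl; auto. apply IHcs. intros; apply H; simpl; auto.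
Qed.

Lemma span_trans u w v : (forall y, In y u -> in_span w y) -> in_span u v -> in_span w v.
Proof.
  intros H [cs [Hcs ->]]. apply span_lc. intros p Hp. apply H, Hcs, Hp.
Qed.

Lemma span_sub u v w : in_span u v -> in_span u w -> in_span u (vsub v w).
Proof.
  intros Hv Hw. replace (vsub v w) with (vadd v (vscale (-1) w)).
  - apply span_add; auto. apply span_scale; auto.
  - apply vext; intro i; unfold vadd, vscale, vsub; lra.
Qed.

Lemma span_incl u w v : incl u w -> in_span u v -> in_span w v.
Proof.
  intros H. apply span_trans. intros y Hy. apply span_mem, H, Hy.
Qed.

Lemma lc_coord cs r : (forall p, In p cs -> snd p r = 0) -> lc cs r = 0.
Proof.
  induction cs; intro H; simpl.
  - reflexivity.
  - unfold vadd at 1, vscale at 1.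
    assert (E1 : lc cs r = 0) by (apply IHcs; intros; apply H; simpl; auto).
    assert (E2 : snd a r = 0) by (apply H; simpl; auto).
    destruct a as [c v]. simpl in *. rewrite E1, E2. lra.
Qed.

(** Some [w] in [u] has a nonzero [r]-th
    coordinate; projecting along [w] onto the hyperplane of vanishing [r]-th
    coordinate removes [w] and fixes [e_0, ..., e_(r-1)]. *)
Lemma steinitz : forall r (u : list Dv), (forall a, (a < r)%nat -> in_span u (ev a)) ->
  (r <= length u)%nat.
Proof.
  induction r as [|r IH]; intros u H.
  - lia.
  - assert (Hr : exists w, In w u /\ w r <> 0).
    { apply NNPP; intro Hn. destruct (H r ltac:(lia)) as [cs [Hcs Hev]].
      assert (E : ev r r = lc cs r) by (rewrite Hev; reflexivity).
      rewrite lc_coord in E.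
      - unfold ev in E. rewrite Nat.eqb_refl in E. lra.
      - intros p Hp. apply NNPP; intro Hp'. apply Hn. exists (snd p). split; auto. }
    destruct Hr as [w [Hw Hwr]].
    destruct (in_split _ _ Hw) as [u1 [u2 Eu]].
    set (P := fun y : Dv => fun i => y i - (y r / w r) * w i).
    assert (Plin : forall cs, P (lc cs) = lc (map (fun p => (fst p, P (snd p))) cs)).
    { induction cs as [|p cs IHc]; simpl.
      - apply vext; intro i. unfold P, vzero. field. auto.
      - rewrite <- IHc. apply vext; intro i. unfold P, vadd, vscale. field. auto. }
    assert (Hlen : (r <= length (map P (u1 ++ u2)))%nat).
    { apply IH. intros a Ha. destruct (H a ltac:(lia)) as [cs [Hcs Hev]].
      assert (E : ev a = P (ev a)).
      { apply vext; intro i. unfold P, ev.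
        replace (Nat.eqb r a) with false by (symmetry; apply Nat.eqb_neq; lia).
        field. auto. }
      rewrite E, Hev, Plin. apply span_lc. intros p Hp. apply in_map_iff in Hp.
      destruct Hp as [q [<- Hq]]. simpl.
      specialize (Hcs q Hq). rewrite Eu in Hcs. apply in_app_or in Hcs.
      destruct Hcs as [Hq1|[Hq1|Hq1]].
      - apply span_mem, in_map, in_or_app; auto.
      - rewrite <- Hq1. replace (P w) with vzero. apply span_zero.
        apply vext; intro i. unfold P, vzero. field. auto.
      - apply span_mem, in_map, in_or_app; auto. }
    rewrite length_map, length_app in Hlen. rewrite Eu, length_app. simpl. lia.
Qed.

Lemma ev_eq a b : ev a = ev b -> a = b.
Proof.
  intro E. assert (E' : ev a a = ev b a) by (rewrite E; reflexivity).
  unfold ev in E'. rewrite Nat.eqb_refl in E'.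
  destruct (Nat.eqb a b) eqn:Eab. apply Nat.eqb_eq; auto. lra.
Qed.

Lemma injection_into_complement (P : list nat) n (sg : nat -> nat) :
  NoDup P -> (forall a, In a P -> (a < n)%nat /\ (sg a < n)%nat /\ ~ In (sg a) P) ->
  (forall a a', In a P -> In a' P -> sg a = sg a' -> a = a') ->
  (2 * length P <= n)%nat.
Proof.
  intros HP Hsg Hinj.
  assert (Hnd : NoDup (P ++ map sg P)).
  { apply NoDup_app; [exact HP | apply NoDup_map_NoDup_ForallPairs; auto |].
    intros a Ha Hb. apply in_map_iff in Hb. destruct Hb as [a' [<- Ha']].
    exact (proj2 (proj2 (Hsg a' Ha')) Ha). }
  apply NoDup_incl_length with (l' := seq 0 n) in Hnd.
  - rewrite length_app, length_map, length_seq in Hnd. lia.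
  - intros a Ha. apply in_seq. apply in_app_or in Ha. destruct Ha as [Ha|Ha].
    + destruct (Hsg a Ha). lia.
    + apply in_map_iff in Ha. destruct Ha as [a' [<- Ha']]. destruct (Hsg a' Ha') as [_ [? _]]. lia.
Qed.

Section Pivots.
Variable d : list Dv.

Definition pivot (a : nat) : Prop := ~ in_span (d ++ map ev (seq 0 a)) (ev a).

Definition pivots (n : nat) : list nat :=
  filter (fun a => if excluded_middle_informative (pivot a) then true else false) (seq 0 n).

Lemma In_pivots a n : In a (pivots n) <-> (a < n)%nat /\ pivot a.
Proof.
  unfold pivots. rewrite filter_In, in_seq.
  destruct (excluded_middle_informative (pivot a)); split; intros [H1 H2];
    repeat split; auto; try lia; discriminate.
Qed.

Lemma pivots_span n : forall a, (a < n)%nat -> in_span (d ++ map ev (pivots n)) (ev a).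
Proof.
  intro a. induction a as [a IH] using (well_founded_induction lt_wf). intro Ha.
  destruct (classic (pivot a)) as [Hp|Hp].
  - apply span_mem, in_or_app. right. apply in_map, In_pivots. auto.
  - apply NNPP in Hp. apply (span_trans (d ++ map ev (seq 0 a))); auto.
    intros y Hy. apply in_app_or in Hy. destruct Hy as [Hy|Hy].
    + apply span_mem, in_or_app; auto.
    + apply in_map_iff in Hy. destruct Hy as [b [<- Hb]]. apply in_seq in Hb. apply IH; lia.
Qed.

Lemma pivots_many n : (n <= length d + length (pivots n))%nat.
Proof.
  rewrite <- (length_map ev (pivots n)), <- length_app. apply steinitz, pivots_span.
Qed.

(** If every index below [n] has a partner [sg a] with [e_a - e_(sg a)] in
    the span of [d], then [a |-> sg a] maps the pivots injectively to
    non-pivots, so at most half of the indices are pivots. *)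
Lemma pivots_few n (sg : nat -> nat) :
  (forall a, (a < n)%nat -> (sg a < n)%nat /\ sg a <> a /\ in_span d (vsub (ev a) (ev (sg a)))) ->
  (2 * length (pivots n) <= n)%nat.
Proof.
  intro Hsg.
  assert (Hspan : forall a b, (b < a)%nat -> in_span (d ++ map ev (seq 0 a)) (ev b)).
  { intros a b Hb. apply span_mem, in_or_app. right. apply in_map, in_seq. lia. }
  assert (Hd : forall a v, in_span d v -> in_span (d ++ map ev (seq 0 a)) v).
  { intros a v. apply span_incl. intros y Hy; apply in_or_app; auto. }
  assert (Hgt : forall a, In a (pivots n) -> (a < sg a)%nat).
  { intros a Ha. apply In_pivots in Ha. destruct Ha as [Ha Hp].
    destruct (Hsg a Ha) as [_ [Hne Hs]].
    destruct (Nat.lt_trichotomy a (sg a)) as [H|[H|H]]; [auto | congruence|].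
    exfalso. apply Hp. replace (ev a) with (vadd (vsub (ev a) (ev (sg a))) (ev (sg a)))
      by (apply vext; intro i; unfold vadd, vsub; lra).
    apply span_add; auto. }
  assert (Hnot : forall a, In a (pivots n) -> ~ In (sg a) (pivots n)).
  { intros a Ha Hs. pose proof (Hgt a Ha) as Hlt. apply In_pivots in Ha, Hs.
    apply (proj2 Hs). destruct (Hsg a (proj1 Ha)) as [_ [_ Hsp]].
    replace (ev (sg a)) with (vsub (ev a) (vsub (ev a) (ev (sg a))))
      by (apply vext; intro i; unfold vsub; lra).
    apply span_sub; auto. }
  assert (Hinj : forall a a', In a (pivots n) -> In a' (pivots n) -> (a < a')%nat -> sg a <> sg a').
  { intros a a' Ha Ha' Hlt E. apply In_pivots in Ha, Ha'. apply (proj2 Ha').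
    destruct (Hsg a (proj1 Ha)) as [_ [_ Hs1]]. destruct (Hsg a' (proj1 Ha')) as [_ [_ Hs2]].
    rewrite <- E in Hs2.
    replace (ev a') with (vadd (vsub (vsub (ev a') (ev (sg a))) (vsub (ev a) (ev (sg a)))) (ev a))
      by (apply vext; intro i; unfold vadd, vsub; lra).
    apply span_add; auto. apply Hd, span_sub; auto. }
  apply (injection_into_complement (pivots n) n sg); [apply NoDup_filter, seq_NoDup| |].
  - intros a Ha. split; [apply In_pivots in Ha; apply Ha|].
    split; [apply In_pivots in Ha; apply (Hsg a), Ha | apply Hnot, Ha].
  - intros a a' Ha Ha' E. destruct (Nat.lt_trichotomy a a') as [H|[H|H]]; auto; exfalso.
    + exact (Hinj a a' Ha Ha' H E).
    + exact (Hinj a' a Ha' Ha H (eq_sym E)).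
Qed.

End Pivots.

Lemma isolated_basis_vector k (d : list Dv) : (length d < k)%nat ->
  exists a, (a < 2 * k)%nat /\ forall b, (b < 2 * k)%nat -> b <> a ->
     ~ in_span d (vsub (ev a) (ev b)).
Proof.
  intro Hk. apply NNPP; intro Hn.
  assert (Hpartner : forall a, exists b, (a < 2 * k)%nat ->
      (b < 2 * k)%nat /\ b <> a /\ in_span d (vsub (ev a) (ev b))).
  { intro a. apply NNPP; intro H1. apply Hn. exists a. split.
    - apply NNPP; intro Ha. apply H1. exists a. intro; contradiction.
    - intros b Hb Hba Hs. apply H1. exists b. intros _. auto. }
  destruct (choice _ Hpartner) as [sg Hsg].
  pose proof (pivots_many d (2 * k)). pose proof (pivots_few d (2 * k) sg Hsg). lia.
Qed.

Definition vec_eqb (x y : Dv) : bool :=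
  if excluded_middle_informative (x = y) then true else false.

(** [oddset L] is the set of vectors occurring an odd number of times in [L];
    every finite set arises this way, and [++] becomes symmetric difference. *)
Definition oddset (L : list Dv) : Dv -> bool :=
  fun x => fold_right (fun y acc => xorb (vec_eqb x y) acc) false L.
Definition symdiff (S S' : Dv -> bool) : Dv -> bool := fun x => xorb (S x) (S' x).
Definition translate (a : Dv) (S : Dv -> bool) : Dv -> bool := fun x => S (vsub x a).

Lemma vec_eqb_refl x : vec_eqb x x = true.
Proof. unfold vec_eqb. destruct (excluded_middle_informative (x = x)); auto. Qed.

Lemma vec_eqb_true x y : vec_eqb x y = true -> x = y.
Proof. unfold vec_eqb. destruct (excluded_middle_informative (x = y)); auto. discriminate. Qed.

Lemma oddset_app L L' : oddset (L ++ L') = symdiff (oddset L) (oddset L').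
Proof.
  apply functional_extensionality; intro x. unfold symdiff, oddset.
  induction L; simpl; auto. rewrite IHL. symmetry. apply xorb_assoc.
Qed.

Lemma oddset_map a L : oddset (map (vadd a) L) = translate a (oddset L).
Proof.
  apply functional_extensionality; intro x. unfold translate, oddset.
  induction L as [|y L IH]; simpl; auto. rewrite IH. f_equal. unfold vec_eqb.
  destruct (excluded_middle_informative (x = vadd a y)) as [E|E],
    (excluded_middle_informative (vsub x a = y)) as [E'|E']; auto; exfalso.
  - apply E'. subst. apply vext; intro i. unfold vsub, vadd; lra.
  - apply E. subst. apply vext; intro i. unfold vsub, vadd; lra.
Qed.

Lemma oddset_In L x : oddset L x = true -> In x L.
Proof.
  induction L as [|y L IH]; simpl; [discriminate|]. unfold oddset. simpl. intro H.
  destruct (vec_eqb x y) eqn:E; [left; symmetry; apply vec_eqb_true; auto | right; apply IH, H].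
Qed.

(** * The group [I ⋊ D]

    [D = R^nat] acts by translation on the group [I] of finite subsets of [D]
    of even cardinality, under symmetric difference. *)

Definition EvenSet :=
  { S : Dv -> bool | exists L, Nat.even (length L) = true /\ S = oddset L }.

Lemma EvenSet_eq (A B : EvenSet) : proj1_sig A = proj1_sig B -> A = B.
Proof.
  destruct A as [A HA], B as [B HB]; simpl. intros <-. f_equal. apply proof_irrelevance.
Qed.

Definition es_of (L : list Dv) (HL : Nat.even (length L) = true) : EvenSet :=
  exist _ (oddset L) (ex_intro _ L (conj HL eq_refl)).

Definition es_empty : EvenSet := es_of [] eq_refl.

Definition es_xor (A B : EvenSet) : EvenSet.
Proof.
  refine (exist _ (symdiff (proj1_sig A) (proj1_sig B)) _).
  destruct A as [A [L [HL ->]]], B as [B [L' [HL' ->]]].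
  simpl. exists (L ++ L'). split; [|symmetry; apply oddset_app].
  rewrite length_app, Nat.even_add, HL, HL'. reflexivity.
Defined.

Definition es_translate (a : Dv) (A : EvenSet) : EvenSet.
Proof.
  refine (exist _ (translate a (proj1_sig A)) _).
  destruct A as [A [L [HL ->]]].
  simpl. exists (map (vadd a) L). rewrite length_map, oddset_map. auto.
Defined.

Definition Lamp := (EvenSet * Dv)%type.
Definition lmul (p q : Lamp) : Lamp :=
  (es_xor (fst p) (es_translate (snd p) (fst q)), vadd (snd p) (snd q)).
Definition linv (p : Lamp) : Lamp := (es_translate (vneg (snd p)) (fst p), vneg (snd p)).
Definition lone : Lamp := (es_empty, vzero).

Definition lamps (x : Lamp) : Dv -> bool := proj1_sig (fst x).

Lemma Lamp_eq (p q : Lamp) : lamps p = lamps q -> snd p = snd q -> p = q.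
Proof. destruct p, q; simpl. intros E1 E2. f_equal; auto. apply EvenSet_eq; auto. Qed.

Lemma lmulA x y z : lmul x (lmul y z) = lmul (lmul x y) z.
Proof.
  apply Lamp_eq; simpl.
  - apply functional_extensionality; intro v. unfold lamps; simpl; unfold symdiff, translate.
    rewrite xorb_assoc. do 3 f_equal. apply vext; intro i. unfold vsub, vadd; lra.
  - apply vext; intro i; unfold vadd; lra.
Qed.

Lemma lmul1 x : lmul lone x = x.
Proof.
  apply Lamp_eq; simpl.
  - apply functional_extensionality; intro v. unfold lamps; simpl; unfold symdiff, translate, oddset; simpl.
    f_equal. apply vext; intro i; unfold vsub, vzero; lra.
  - apply vext; intro i; unfold vadd, vzero; lra.
Qed.

Lemma lmulV x : lmul (linv x) x = lone.
Proof.
  apply Lamp_eq; simpl.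
  - apply functional_extensionality; intro v. unfold lamps; simpl; unfold symdiff, translate.
    apply xorb_nilpotent.
  - apply vext; intro i; unfold vadd, vneg, vzero; lra.
Qed.

Definition lamp_group : group := Group Lamp lmul linv lone lmulA lmul1 lmulV.

Lemma lamps_even x : exists L, lamps x = oddset L /\ Nat.even (length L) = true.
Proof. destruct (proj2_sig (fst x)) as [L [HL E]]. exists L. auto. Qed.

Definition lcomm (x y : Lamp) : Lamp := lmul (lmul (lmul x y) (linv x)) (linv y).

Lemma lamps_comm x y : lamps (lcomm x y) =
  symdiff (symdiff (lamps x) (translate (snd y) (lamps x)))
          (symdiff (lamps y) (translate (snd x) (lamps y))).
Proof.
  unfold lamps, lcomm, lmul, linv; simpl. apply functional_extensionality; intro v.
  unfold symdiff, translate.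
  replace (vsub (vsub v (vadd (snd x) (snd y))) (vneg (snd x))) with (vsub v (snd y))
    by (apply vext; intro i; unfold vsub, vadd, vneg; lra).
  replace (vsub (vsub v (vadd (vadd (snd x) (snd y)) (vneg (snd x)))) (vneg (snd y))) with v
    by (apply vext; intro i; unfold vsub, vadd, vneg; lra).
  destruct (proj1_sig (fst x) v), (proj1_sig (fst x) (vsub v (snd y))),
    (proj1_sig (fst y) v), (proj1_sig (fst y) (vsub v (snd x))); reflexivity.
Qed.

Lemma shift_comm x y : snd (lcomm x y) = vzero.
Proof. apply vext; intro i. unfold lcomm, lmul, linv, vadd, vneg, vzero; simpl. lra. Qed.

Lemma translation_pow c m : @gpow lamp_group (es_empty, c) m = (es_empty, vscale (INR m) c).
Proof.
  induction m as [|m IH].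
  - apply Lamp_eq; [reflexivity|]. simpl. apply vext; intro i; unfold vscale, vzero. simpl. lra.
  - simpl gpow. rewrite IH. apply Lamp_eq.
    + apply functional_extensionality; intro v; reflexivity.
    + simpl. apply vext; intro i. unfold vadd, vscale. destruct m; simpl; lra.
Qed.

Lemma translation_divisible c : @divisible lamp_group (es_empty, c).
Proof.
  intro n. exists (es_empty, vscale (/ INR (S n)) c). rewrite translation_pow. f_equal.
  apply vext; intro i; unfold vscale. field. apply not_0_INR. lia.
Qed.

Definition pair_lamp (a b : Dv) : Lamp := (es_of [a; b] eq_refl, vzero).

Lemma pair_lamp_commutator a b :
  let w := vscale (/ 2) (vsub b a) in
  pair_lamp a b = lcomm (es_of [a; vadd w a] eq_refl, vzero) (es_empty, w).
Proof.
  intro w. apply Lamp_eq; [|symmetry; apply shift_comm].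
  rewrite lamps_comm. unfold lamps; simpl. rewrite <- oddset_map. simpl.
  replace (vadd w (vadd w a)) with b by (apply vext; intro i; unfold w, vadd, vscale, vsub; lra).
  apply functional_extensionality; intro v. unfold symdiff, translate, oddset; simpl.
  destruct (vec_eqb v a), (vec_eqb v (vadd w a)), (vec_eqb v b); reflexivity.
Qed.

Section LampSubgroups.
Variable H : lamp_group -> Prop.
Hypothesis H_subgroup : is_subgroup lamp_group H.
Hypothesis H_divisible : forall x : lamp_group, divisible x -> H x.

Lemma pair_lamp_in a b : H (pair_lamp a b).
Proof.
  destruct H_subgroup as [_ [Hm Hi]].
  rewrite pair_lamp_commutator. unfold lcomm. apply (Hm _ (linv _)).
  - apply H_divisible, divisible_conj, translation_divisible.
  - apply Hi, H_divisible, translation_divisible.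
Qed.

Lemma even_lamps_in (A : EvenSet) : H (A, vzero).
Proof.
  destruct H_subgroup as [H1 [Hm _]].
  assert (Hpairs : forall L (HL : Nat.even (length L) = true), H (es_of L HL, vzero)).
  { intro L. induction L as [L IH] using (induction_ltof1 _ (@length Dv)); intro HL.
    destruct L as [|a [|b L']]; [| discriminate |].
    - replace (es_of [] HL, vzero) with lone; [exact H1 | apply Lamp_eq; reflexivity].
    - replace (es_of (a :: b :: L') HL, vzero) with (lmul (pair_lamp a b) (es_of L' HL, vzero)).
      + apply Hm; [apply pair_lamp_in | apply IH; unfold ltof; simpl; lia].
      + apply Lamp_eq; simpl.
        * unfold lamps. simpl. apply functional_extensionality; intro v.
          unfold symdiff, translate, oddset; simpl.
          replace (vsub v vzero) with v by (apply vext; intro i; unfold vsub, vzero; lra).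
          rewrite xorb_false_r. apply xorb_assoc.
        * apply vext; intro i; unfold vadd, vzero; lra. }
  destruct (proj2_sig A) as [L [HL HA]].
  replace (A, vzero) with (es_of L HL, vzero); [apply Hpairs | apply Lamp_eq; auto].
Qed.

(** Every element is an even set times a translation. *)
Lemma lamp_subgroup_full (x : lamp_group) : H x.
Proof.
  destruct x as [A d].
  replace (A, d) with (lmul (A, vzero) (es_empty, d)).
  - apply H_subgroup; [apply even_lamps_in | apply H_divisible, translation_divisible].
  - apply Lamp_eq; simpl.
    + apply functional_extensionality; intro v. unfold lamps, symdiff, translate. simpl.
      apply xorb_false_r.
    + apply vext; intro i; unfold vadd, vzero; lra.
Qed.

End LampSubgroups.

Theorem lamp_NFQ : NFQ lamp_group.
Proof.
  split.
  - exists (pair_lamp (ev 0) (ev 1)). intro E.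
    apply (f_equal (fun q : Lamp => lamps q (ev 0))) in E. unfold lamps, oddset in E.
    simpl in E. rewrite vec_eqb_refl in E. unfold vec_eqb in E.
    destruct (excluded_middle_informative (ev 0 = ev 1)) as [E01|]; [|discriminate].
    apply ev_eq in E01. discriminate.
  - intros H HS Hfi [x Hx]. apply Hx, lamp_subgroup_full; auto.
    intros y Hy. apply (divisible_in_finite_index _ H y HS Hfi Hy).
Qed.

(** * Short elements

    Squares and commutators of [I ⋊ D] light sets of the form
    [S + (S + d)]; a set is [m]-short when it is a sum of at most [m] such
    "doubled" sets. *)

Definition doubled (ts : list (list Dv * Dv)) : list Dv :=
  flat_map (fun p => fst p ++ map (vadd (snd p)) (fst p)) ts.

Definition short (m : nat) (S : Dv -> bool) : Prop :=
  exists ts, (length ts <= m)%nat /\ S = oddset (doubled ts).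

Lemma short_symdiff m m' S S' : short m S -> short m' S' -> short (m + m') (symdiff S S').
Proof.
  intros [ts [H1 ->]] [ts' [H2 ->]]. exists (ts ++ ts'). split.
  - rewrite length_app; lia.
  - unfold doubled. rewrite flat_map_app, oddset_app. reflexivity.
Qed.

Lemma short_translate m a S : short m S -> short m (translate a S).
Proof.
  intros [ts [H1 ->]]. exists (map (fun p => (map (vadd a) (fst p), snd p)) ts).
  rewrite length_map, <- oddset_map. split; [exact H1|]. clear H1. f_equal.
  unfold doubled. induction ts as [|p ts IH]; simpl; auto.
  rewrite !map_app, IH, !map_map, <- !app_assoc. do 2 f_equal.
  apply map_ext; intro y. apply vext; intro i; unfold vadd; lra.
Qed.

Lemma short_doubled L a : short 1 (symdiff (oddset L) (translate a (oddset L))).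
Proof.
  exists [(L, a)]. split; auto. unfold doubled. simpl.
  rewrite app_nil_r, oddset_app, oddset_map. reflexivity.
Qed.

Lemma short_mul m m' x y :
  short m (lamps x) -> short m' (lamps y) -> short (m + m') (lamps (lmul x y)).
Proof. intros H1 H2. apply short_symdiff; auto. apply short_translate; auto. Qed.

Lemma short_inv m x : short m (lamps x) -> short m (lamps (linv x)).
Proof. apply short_translate. Qed.

Lemma short_square x : short 1 (lamps (lmul x x)).
Proof. destruct (lamps_even x) as [L [HL _]]. unfold lamps, lmul in *; simpl. rewrite HL. apply short_doubled. Qed.

Lemma short_comm x y : short 2 (lamps (lcomm x y)).
Proof.
  rewrite lamps_comm. destruct (lamps_even x) as [L [HL _]], (lamps_even y) as [L' [HL' _]].
  rewrite HL, HL'. apply (short_symdiff 1 1); apply short_doubled.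
Qed.

Definition parity (p : Dv -> bool) (L : list Dv) : bool :=
  fold_right (fun y acc => xorb (p y) acc) false L.

Lemma parity_app p L L' : parity p (L ++ L') = xorb (parity p L) (parity p L').
Proof. induction L; simpl; auto. rewrite IHL. symmetry; apply xorb_assoc. Qed.

(** A list representing the empty set has even parity: its entries cancel
    in pairs. *)
Lemma parity_of_empty p : forall n M, (length M <= n)%nat -> (forall x, oddset M x = false) ->
  parity p M = false.
Proof.
  induction n; intros M HM HZ; [destruct M; simpl in *; auto; lia|].
  destruct M as [|a M']; simpl; auto.
  assert (Ha : oddset M' a = true).
  { specialize (HZ a). unfold oddset in HZ |- *. simpl in HZ. rewrite vec_eqb_refl in HZ.
    destruct (fold_right _ false M'); simpl in HZ; auto. }
  destruct (in_split _ _ (oddset_In _ _ Ha)) as [M1 [M2 ->]].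
  assert (H2 : parity p (M1 ++ M2) = false).
  { apply IHn; [simpl in HM; rewrite length_app in *; simpl in HM; lia|].
    intro x. specialize (HZ x). rewrite oddset_app. unfold symdiff.
    change (oddset (a :: M1 ++ a :: M2) x) with (xorb (vec_eqb x a) (oddset (M1 ++ a :: M2) x))
      in HZ.
    rewrite oddset_app in HZ. unfold symdiff in HZ.
    change (oddset (a :: M2) x) with (xorb (vec_eqb x a) (oddset M2 x)) in HZ.
    destruct (vec_eqb x a), (oddset M1 x), (oddset M2 x); auto. }
  rewrite parity_app in H2 |- *. simpl.
  destruct (p a), (parity p M1), (parity p M2); auto.
Qed.

Lemma parity_oddset p L L' : oddset L = oddset L' -> parity p L = parity p L'.
Proof.
  intro E. assert (H : parity p (L ++ L') = false).
  { apply (parity_of_empty p (length (L ++ L'))); auto. intro x.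
    rewrite oddset_app, E. unfold symdiff. apply xorb_nilpotent. }
  rewrite parity_app in H. destruct (parity p L), (parity p L'); auto.
Qed.

Lemma parity_doubled p ts :
  (forall y, In y (map snd ts) -> forall x, p (vadd y x) = p x) ->
  parity p (doubled ts) = false.
Proof.
  induction ts as [|[L a] ts IH]; intro Hinv; simpl; auto.
  rewrite !parity_app, IH by (intros; apply Hinv; simpl; auto).
  assert (E : parity p (map (vadd a) L) = parity p L).
  { induction L; simpl; auto. rewrite IHL, Hinv; simpl; auto. }
  rewrite E. destruct (parity p L); auto.
Qed.

Definition basis_set (k : nat) : list Dv := map ev (seq 0 (2 * k)).

Lemma parity_basis_set p k a : (a < 2 * k)%nat ->
  (forall n, (n < 2 * k)%nat -> p (ev n) = Nat.eqb n a) -> parity p (basis_set k) = true.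
Proof.
  intros Ha Hp.
  assert (H : forall n, (n <= 2 * k)%nat -> parity p (map ev (seq 0 n)) = Nat.ltb a n).
  { induction n; intro Hn; [reflexivity|].
    rewrite seq_S, map_app, parity_app, IHn by lia. simpl. rewrite Hp by lia.
    destruct (Nat.ltb a n) eqn:E1, (Nat.eqb n a) eqn:E2, (Nat.ltb a (S n)) eqn:E3; auto;
      rewrite ?Nat.ltb_lt, ?Nat.ltb_ge, ?Nat.eqb_eq, ?Nat.eqb_neq in *; lia. }
  unfold basis_set. rewrite H by lia. apply Nat.ltb_lt, Ha.
Qed.

Definition span_class (d : list Dv) (a : nat) (x : Dv) : bool :=
  if excluded_middle_informative (in_span d (vsub x (ev a))) then true else false.

Lemma span_class_invariant d a y x : In y d -> span_class d a (vadd y x) = span_class d a x.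
Proof.
  intro Hy. unfold span_class.
  destruct (excluded_middle_informative (in_span d (vsub (vadd y x) (ev a)))) as [H1|H1],
    (excluded_middle_informative (in_span d (vsub x (ev a)))) as [H2|H2]; auto; exfalso.
  - apply H2. replace (vsub x (ev a)) with (vsub (vsub (vadd y x) (ev a)) y)
      by (apply vext; intro i; unfold vsub, vadd; lra).
    apply span_sub; auto. apply span_mem; auto.
  - apply H1. replace (vsub (vadd y x) (ev a)) with (vadd (vsub x (ev a)) y)
      by (apply vext; intro i; unfold vsub, vadd; lra).
    apply span_add; auto. apply span_mem; auto.
Qed.

(** [{e_0, ..., e_(2k-1)}] is not [m]-short for [m < k]: for an isolated
    [e_a] modulo the translations [d] used, the class of [e_a] has odd
    parity on it but even parity on every [m]-short set. *)
Lemma basis_set_not_short m k : short m (oddset (basis_set k)) -> (k <= m)%nat.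
Proof.
  intros [ts [Hlen HT]]. apply NNPP; intro Hk.
  set (d := map snd ts).
  destruct (isolated_basis_vector k d) as [a [Ha Hiso]]; [unfold d; rewrite length_map; lia|].
  assert (Hodd : parity (span_class d a) (basis_set k) = true).
  { apply (parity_basis_set _ k a Ha). intros n Hn. unfold span_class.
    destruct (Nat.eqb n a) eqn:Ena;
      destruct (excluded_middle_informative (in_span d (vsub (ev n) (ev a)))) as [Hs|Hs]; auto.
    - exfalso. apply Nat.eqb_eq in Ena. subst n. apply Hs.
      replace (vsub (ev a) (ev a)) with vzero by (apply vext; intro i; unfold vsub, vzero; lra).
      apply span_zero.
    - exfalso. apply Nat.eqb_neq in Ena. apply (Hiso n Hn Ena).
      replace (vsub (ev a) (ev n)) with (vscale (-1) (vsub (ev n) (ev a)))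
        by (apply vext; intro i; unfold vscale, vsub; lra).
      apply span_scale, Hs. }
  rewrite (parity_oddset _ _ _ HT), parity_doubled in Hodd; [discriminate|].
  intros y Hy x. apply span_class_invariant, Hy.
Qed.

Lemma basis_set_even k : Nat.even (length (basis_set k)) = true.
Proof. unfold basis_set. rewrite length_map, length_seq, Nat.even_mul. reflexivity. Qed.

Definition basis_lamp (k : nat) : Lamp := (es_of (basis_set k) (basis_set_even k), vzero).

Section UltrapowerOfLamps.
Variable U : UF.
Let UL := ultrapower lamp_group U.

Definition uniformly_short (c : UL) : Prop :=
  exists m, uf U (fun n => short m (lamps (urep lamp_group U c n))).

Lemma urep_mul (a b : UL) : uf U (fun n =>
  urep lamp_group U (@gmul UL a b) n = lmul (urep lamp_group U a n) (urep lamp_group U b n)).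
Proof. apply urep_umk. Qed.

Lemma urep_inv (a : UL) :
  uf U (fun n => urep lamp_group U (@ginv UL a) n = linv (urep lamp_group U a n)).
Proof. apply urep_umk. Qed.

Lemma uniformly_short_subgroup : is_subgroup UL uniformly_short.
Proof.
  split; [|split].
  - exists 0%nat. apply (uf_mono U _ _ (urep_umk lamp_group U (fun _ => @gone lamp_group))).
    intros n e. change (short 0 (lamps (urep lamp_group U (uone lamp_group U) n))).
    unfold uone. rewrite e. exists []. split; auto.
  - intros a b [m Ha] [m' Hb]. exists (m + m')%nat.
    apply (uf_mono U _ _ (uf_and3 U _ _ _ (urep_mul a b) Ha Hb)).
    intros n [-> [h1 h2]]. apply short_mul; auto.
  - intros a [m Ha]. exists m. apply (uf_mono U _ _ (uf_and U _ _ (urep_inv a) Ha)).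
    intros n [-> h]. apply short_inv; auto.
Qed.

Lemma uniformly_short_squares x : uniformly_short (@gmul UL x x).
Proof.
  exists 1%nat. apply (uf_mono U _ _ (urep_mul x x)). intros n ->. apply short_square.
Qed.

Lemma uniformly_short_commutators x y :
  uniformly_short (@gmul UL (@gmul UL (@gmul UL x y) (@ginv UL x)) (@ginv UL y)).
Proof.
  exists 2%nat.
  set (xy := @gmul UL x y). set (xyx := @gmul UL xy (@ginv UL x)).
  apply (uf_mono U _ _ (uf_and3 U _ _ _ (urep_mul xyx (@ginv UL y))
           (uf_and3 U _ _ _ (urep_mul xy (@ginv UL x)) (urep_mul x y) (urep_inv x))
           (urep_inv y))).
  intros n [e1 [[e2 [e3 e4]] e5]]. unfold xyx, xy in *.
  rewrite e1, e2, e3, e4, e5. apply short_comm.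
Qed.

Lemma basis_lamps_not_short : ~ uniformly_short (umk lamp_group U basis_lamp).
Proof.
  intros [m Hm].
  destruct (uf_ex U _ (uf_and3 U _ _ _ Hm (urep_umk lamp_group U basis_lamp) (uf_cof U (S m))))
    as [n [Hshort [Hrep Hn]]].
  rewrite Hrep in Hshort. apply basis_set_not_short in Hshort. lia.
Qed.

Theorem ultrapower_lamps_proper_fi : proper_fi_subgroup UL.
Proof.
  exact (proper_fi_of_exponent_two_quotient UL uniformly_short uniformly_short_subgroup
           uniformly_short_squares uniformly_short_commutators _ basis_lamps_not_short).
Qed.

End UltrapowerOfLamps.

(** If NFQ were axiomatized by a set of sentences, the ultrapower of the NFQ
    group [I ⋊ D] would satisfy them by Łoś's theorem, yet it is not NFQ; and
    [(I ⋊ D)^omega] maps onto that ultrapower, so it is not NFQ either. *)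
Theorem mainTheorem2 :
  ~ elementary_class NFQ /\
  (exists G : group, NFQ G /\ ~ NFQ (pow_omega G)).
Proof.
  destruct ultrafilter_exists as [U].
  split.
  - intros [T [_ HT]].
    apply (proper_fi_not_NFQ _ (ultrapower_lamps_proper_fi U)), HT.
    intros phi Hphi. apply models_ultrapower, HT; [apply lamp_NFQ | exact Hphi].
  - exists lamp_group. split; [exact lamp_NFQ|].
    apply proper_fi_not_NFQ, (proper_fi_power_of_ultrapower lamp_group U),
      ultrapower_lamps_proper_fi.
Qed.
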